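(* Let $G$ be a connected threshold graph of order $n\ge 4$ and size $m$ with $n-1<m<\binom{n}{2}$, with $c$ type 1 vertices, forward one position sequence $(f_1,\ldots,f_c)$ and numbers $F_p$ as in the context. Let $\Phi\in\mathbb{R}^{c\times c}$ be given by $\Phi_{ij}=f_{\min\{i,j\}}$, $\mathbf{1}\in\mathbb{R}^c$ the all-ones vector, and $\lambda_1,\ldots,\lambda_c$ the eigenvalues of $\Phi$ with corresponding orthonormal eigenvectors $x_1,\ldots,x_c$. Then \[F_p=\sum_{i=1}^c(\mathbf{1}^\intercal x_i)^2\,\lambda_i^p\qquad(p\in\mathbb{N}_0).\]
   Context: A threshold graph is a simple graph whose vertices can be ordered $v_1,\ldots,v_n$ so that for each $2\le i\le n$, $v_i$ is either adjacent to all of $v_1,\ldots,v_{i-1}$ (then $a_i=1$) or to none of them (then $a_i=0$); by convention $a_1=1$. Vertex $v_i$ is of type 1 if $a_i=1$ and of type 0 if $a_i=0$; $c$ and $z$ are the numbers of type 1 and type 0 vertices. The backwards zero position sequence $(b_1,\ldots,b_z)$: $b_i$ is the number of type 1 vertices appearing after the $i$-th type 0 vertex in the order $v_1,\ldots,v_n$. The forward one position sequence $(f_1,\ldots,f_c)$: $f_i$ is the number of type 0 vertices appearing before the $i$-th type 1 vertex in the order $v_1,\ldots,v_n$. Define $F_0=c$ and for $p\ge1$, $F_p=\sum_{i_1,\ldots,i_p=1}^{z} b_{i_1}\min\{b_{i_1},b_{i_2}\}\cdots\min\{b_{i_{p-1}},b_{i_p}\}\,b_{i_p}$. *)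

From HB Require Import structures.
From mathcomp Require Import all_boot all_order all_algebra.
From mathcomp Require Import all_classical all_reals.
Set Implicit Arguments. Unset Strict Implicit. Unset Printing Implicit Defensive.
Import Order.TTheory GRing.Theory Num.Theory.

(* A threshold graph is given by its creation sequence s = [:: a_1; ...; a_n]
   (true = type 1, false = type 0), with the convention a_1 = true. *)

(* vertices 'I_n (v_{i+1} is index i); v_i ~ v_j (i < j) iff a_j = 1 *)
Definition thr_adj (s : seq bool) (n : nat) : rel 'I_n :=
  fun i j => (i != j) && nth false s (maxn i j).

Definition thr_connected (s : seq bool) (n : nat) : Prop :=
  forall i j : 'I_n, connect (@thr_adj s n) i j.

Definition thr_size (s : seq bool) (n : nat) : nat :=
  #|[set p : 'I_n * 'I_n | (p.1 < p.2) && thr_adj s p.1 p.2]|.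

Definition ntype1 (s : seq bool) : nat := count id s.
Definition ntype0 (s : seq bool) : nat := count negb s.

Fixpoint bseq (s : seq bool) : seq nat :=
  match s with
  | [::] => [::]
  | x :: t => if x then bseq t else count id t :: bseq t
  end.

(* forward one position sequence: for each type 1 vertex (in order),
   the number of type 0 vertices before it *)
Fixpoint fseq_aux (k : nat) (s : seq bool) : seq nat :=
  match s with
  | [::] => [::]
  | x :: t => if x then k :: fseq_aux k t else fseq_aux k.+1 t
  end.
Definition fseq (s : seq bool) : seq nat := fseq_aux 0 s.

(* F_0 = c ; F_{p+1} = sum over (i_1,...,i_{p+1}) in [1..z]^{p+1} of
   b_{i_1} min(b_{i_1},b_{i_2}) ... min(b_{i_p},b_{i_{p+1}}) b_{i_{p+1}}
   (indices 0-based here) *)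
Definition Fnum (s : seq bool) (p : nat) : nat :=
  match p with
  | 0 => ntype1 s
  | q.+1 =>
    let b := fun i : 'I_(ntype0 s) => nth 0 (bseq s) i in
    \sum_(g : {ffun 'I_q.+1 -> 'I_(ntype0 s)})
       (b (g ord0)
        * (\prod_(k < q) minn (b (g (widen_ord (leqnSn q) k))) (b (g (lift ord0 k))))
        * b (g ord_max))
  end.

Definition Phi (R : nzRingType) (s : seq bool) : 'M[R]_(ntype1 s) :=
  \matrix_(i, j) ((nth 0%N (fseq s) (minn i j))%:R)%R.

From Pilot Require Import Defs.
From mathcomp Require Import all_boot all_algebra all_reals.

Set Implicit Arguments.
Unset Strict Implicit.
Unset Printing Implicit Defensive.

Import GRing.Theory.

(* Let N be the 0/1 matrix with N_jk = 1 iff the k-th type 0 vertex precedes the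
   j-th type 1 vertex, i.e. k < f_j: the biadjacency matrix between the type 1
   and the type 0 vertices.  Since f is nondecreasing and b is its conjugate
   sequence (b_k counts the f_j exceeding k), N N^T = Phi, 1^T N = b and
   N^T N = (min(b_k, b_l))_kl.  Hence F_(p+1), a weighted sum over walks of
   length p in the index set of b, equals b (N^T N)^p b^T = 1^T (N N^T)^(p+1) 1,
   so F_p = 1^T Phi^p 1 for all p, and diagonalising Phi = X diag(lam) X^T gives
   the claim. *)

Lemma size_fseq_aux m s : size (fseq_aux m s) = count id s.
Proof. by elim: s m => [|[] t IH] m //=; rewrite IH. Qed.

Lemma fseq_aux_path m s : path leq m (fseq_aux m s).
Proof.
elim: s m => [|[] t IH] m //=; first by rewrite leqnn IH.
exact: (path_le leq_trans (leqnSn m) (IH m.+1)).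
Qed.

Lemma fseq_aux_le m s : all (leq^~ (m + count negb s)) (fseq_aux m s).
Proof.
elim: s m => [|[] t IH] m //=; first by rewrite leq_addr IH.
by rewrite -addSnnS.
Qed.

Lemma nth_bseq_fseq_aux m s k : k < count negb s ->
  nth 0 (Defs.bseq s) k = count (fun x => m + k < x) (fseq_aux m s).
Proof.
elim: s m k => [|[] t IH] m k //=; first by move=> /(IH m) ->; rewrite ltnNge leq_addr.
case: k => [|k] /= lt_k; last by rewrite (IH m.+1) // addSnnS.
rewrite addn0 -(size_fseq_aux m.+1) -count_predT; apply: eq_in_count => x x_in.
by rewrite (allP (order_path_min leq_trans (fseq_aux_path m.+1 t)) x x_in).
Qed.

Local Open Scope ring_scope.

Section Walks.
Variables (R : pzSemiRingType) (z : nat).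

Definition ffun_cons (q : nat) (x : 'I_z) (g : {ffun 'I_q -> 'I_z}) : {ffun 'I_q.+1 -> 'I_z} :=
  [ffun i => if unlift ord0 i is Some j then g j else x].

Lemma ffun_cons0 q x (g : {ffun 'I_q -> 'I_z}) : ffun_cons x g ord0 = x.
Proof. by rewrite ffunE unlift_none. Qed.

Lemma ffun_consS q x (g : {ffun 'I_q -> 'I_z}) j : ffun_cons x g (lift ord0 j) = g j.
Proof. by rewrite ffunE liftK. Qed.

Lemma big_ffun_cons q (F : {ffun 'I_q.+1 -> 'I_z} -> R) :
  \sum_g F g = \sum_(x : 'I_z) \sum_(g : {ffun 'I_q -> 'I_z}) F (ffun_cons x g).
Proof.
rewrite pair_big (reindex (fun p => ffun_cons p.1 p.2)) //=.
exists (fun g => (g ord0, [ffun j => g (lift ord0 j)])) => [[x g] _|g _] /=.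
  by rewrite ffun_cons0; congr (_, _); apply/ffunP => j; rewrite ffunE ffun_consS.
by apply/ffunP => i; rewrite ffunE; case: unliftP => [j ->|->]; rewrite ?ffunE.
Qed.

Lemma sum_walks_mx q (u : 'rV[R]_z) (M : 'M[R]_z) (w : 'cV[R]_z) :
  \sum_(g : {ffun 'I_q.+1 -> 'I_z})
     (u 0 (g ord0)
      * \prod_(k < q) M (g (widen_ord (leqnSn q) k)) (g (lift ord0 k))
      * w (g ord_max) 0)
  = (u *m M ^+ q *m w) 0 0.
Proof.
elim: q u => [|q IH] u.
  rewrite expr0 mulmx1 mxE big_ffun_cons; apply: eq_bigr => x _.
  under eq_bigr do rewrite big_ord0 mulr1 [ord_max]ord1 ffun_cons0.
  by rewrite sumr_const card_ffun !card_ord.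
rewrite exprS -mulmxE mulmxA -IH big_ffun_cons exchange_big /=.
apply: eq_bigr => g _; rewrite mxE big_distrl big_distrl /=; apply: eq_bigr => x _.
rewrite big_ord_recl.
have -> : widen_ord (leqnSn q.+1) ord0 = ord0 by apply: val_inj.
have -> : (ord_max : 'I_q.+2) = lift ord0 ord_max by apply: val_inj.
rewrite ffun_cons0 !ffun_consS !mulrA; congr (_ * _ * _).
apply: eq_bigr => k _.
have -> : widen_ord (leqnSn q.+1) (lift ord0 k) = lift ord0 (widen_ord (leqnSn q) k).
  exact: val_inj.
by rewrite !ffun_consS.
Qed.

End Walks.

Lemma mulmx_expr_swap (R : pzSemiRingType) m n (A : 'M[R]_(m, n)) (B : 'M[R]_(n, m)) q :
  A *m (B *m A) ^+ q = (A *m B) ^+ q *m A.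
Proof.
elim: q => [|q IH]; first by rewrite !expr0 mulmx1 mul1mx.
by rewrite exprS -mulmxE !mulmxA -(mulmxA (A *m B)) IH exprS -mulmxE mulmxA.
Qed.

Lemma expr_diagonalization (R : comPzRingType) n (A X : 'M[R]_n) (d : 'rV[R]_n) p :
  X^T *m X = 1%:M -> A *m X = X *m diag_mx d ->
  A ^+ p = X *m diag_mx (\row_i (d 0 i ^+ p)) *m X^T.
Proof.
move=> XtX AX; have XXt : X *m X^T = 1%:M := mulmx1C XtX.
have -> : A = X *m diag_mx d *m X^T by rewrite -AX -mulmxA XXt mulmx1.
elim: p => [|p IH].
  rewrite expr0 (_ : \row_i _ = const_mx 1) ?diag_const_mx ?mulmx1 //.
  by apply/matrixP => i j; rewrite !mxE.
rewrite exprSr IH -mulmxE !mulmxA -(mulmxA _ X^T) XtX mulmx1 -(mulmxA X) mulmx_diag.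
by congr (_ *m diag_mx _ *m _); apply/matrixP => i j; rewrite !mxE exprSr.
Qed.

Lemma mx_quad_form_diag (R : comPzSemiRingType) n (u : 'rV[R]_n) (X : 'M[R]_n) (e : 'rV[R]_n) :
  (u *m (X *m diag_mx e *m X^T) *m u^T) 0 0 = \sum_i (u *m X) 0 i ^+ 2 * e 0 i.
Proof.
rewrite !mulmxA -(mulmxA _ X^T) -trmx_mul mul_mx_diag mxE; apply: eq_bigr => i _.
by rewrite !mxE mulrAC expr2.
Qed.

Lemma sumr_ord_ltn (R : pzSemiRingType) z a : (a <= z)%N ->
  \sum_(k < z) (k < a)%N%:R = a%:R :> R.
Proof.
move=> le_az; rewrite (eq_bigr (fun k : 'I_z => if (k < a)%N then 1 else 0)).
  by rewrite -big_mkcond (big_ord_narrow le_az) sumr_const card_ord.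
by move=> k _; case: ifP.
Qed.

Lemma natr_count (R : pzSemiRingType) T (P : pred T) l :
  (count P l)%:R = \sum_(x <- l) (P x)%:R :> R.
Proof.
rewrite -sum1_count natr_sum big_mkcond; apply: eq_bigr => x _.
by case: (P x).
Qed.

Section BiadjacencyMatrix.
Variables (R : comNzRingType) (s : seq bool).
Local Notation c := (ntype1 s).
Local Notation z := (ntype0 s).
Local Notation f j := (nth 0%N (fseq s) j).
Local Notation b k := (nth 0%N (Defs.bseq s) k).
Local Notation ones := (const_mx 1 : 'rV[R]_c).

Definition biadj_mx : 'M[R]_(c, z) := \matrix_(j, k) (k < f j)%N%:R.

Lemma size_fseq : size (fseq s) = c.
Proof. exact: size_fseq_aux. Qed.

Lemma nth_fseq_le (j : 'I_c) : (f j <= z)%N.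
Proof. by apply: (allP (fseq_aux_le 0 s)); rewrite mem_nth ?size_fseq. Qed.

Lemma nth_fseq_homo (i j : 'I_c) : (i <= j)%N -> (f i <= f j)%N.
Proof.
move=> le_ij; have sorted_f := path_sorted (fseq_aux_path 0 s).
by apply: (sorted_leq_nth leq_trans leqnn 0%N sorted_f) le_ij; rewrite inE size_fseq.
Qed.

Lemma nth_bseq_fseq (k : 'I_z) : b k = count (fun x => k < x)%N (fseq s).
Proof. exact: nth_bseq_fseq_aux. Qed.

Lemma sum_fseq (F : nat -> R) : \sum_(j < c) F (f j) = \sum_(x <- fseq s) F x.
Proof. by rewrite (big_nth 0%N) size_fseq big_mkord. Qed.

Lemma biadj_mx_mul_tr : biadj_mx *m biadj_mx^T = Phi R s.
Proof.
apply/matrixP => i j; rewrite !mxE.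
under eq_bigr do rewrite !mxE -natrM mulnb -ltn_min.
rewrite sumr_ord_ltn; last by rewrite geq_min nth_fseq_le.
by case: (leqP i j) => [/nth_fseq_homo/minn_idPl | /ltnW/nth_fseq_homo/minn_idPr] ->.
Qed.

Lemma const_mx1_mul_biadj_mx : ones *m biadj_mx = \row_k (b k)%:R.
Proof.
apply/matrixP => i k; rewrite !mxE nth_bseq_fseq natr_count -sum_fseq.
by apply: eq_bigr => j _; rewrite !mxE mul1r.
Qed.

Lemma tr_biadj_mx_mul : biadj_mx^T *m biadj_mx = \matrix_(k, l) (minn (b k) (b l))%:R.
Proof.
apply/matrixP => k l; rewrite !mxE !nth_bseq_fseq.
have -> : minn (count (fun x => k < x)%N (fseq s)) (count (fun x => l < x)%N (fseq s))
          = count (fun x => maxn k l < x)%N (fseq s).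
  case: (leqP k l) => [le_kl | lt_lk].
    by apply/minn_idPr/sub_count => x; apply: leq_ltn_trans.
  by apply/minn_idPl/sub_count => x; apply: ltn_trans.
rewrite natr_count -sum_fseq; apply: eq_bigr => j _.
by rewrite !mxE -natrM mulnb gtn_max.
Qed.

Lemma Fnum_Phi p :
  (Fnum s p)%:R = (ones *m Phi R s ^+ p *m ones^T) 0 0.
Proof.
case: p => [|q].
  rewrite expr0 mulmx1 mxE /Fnum -[X in X%:R]card_ord -sum1_card natr_sum.
  by apply: eq_bigr => j _; rewrite !mxE mulr1.
rewrite -biadj_mx_mul_tr exprSr -mulmxE [_ ^+ q *m _]mulmxA -mulmx_expr_swap !mulmxA.
rewrite -(mulmxA _ _ ones^T) -trmx_mul const_mx1_mul_biadj_mx tr_biadj_mx_mul.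
rewrite -sum_walks_mx /Fnum natr_sum; apply: eq_bigr => g _.
by rewrite !natrM natr_prod !mxE; congr (_ * _ * _); apply: eq_bigr => k _; rewrite mxE.
Qed.

End BiadjacencyMatrix.

Theorem corollaryA4 (R : realType) (n : nat) (s : seq bool)
  (Hsize : size s = n) (Ha1 : nth false s 0 = true)
  (Hn : (4 <= n)%N)
  (Hconn : thr_connected s n)
  (Hm1 : (n - 1 < thr_size s n)%N) (Hm2 : (thr_size s n < 'C(n, 2))%N)
  (lam : 'rV[R]_(ntype1 s)) (X : 'M[R]_(ntype1 s))
  (Horth : X^T *m X = 1%:M)
  (Heig : Phi R s *m X = X *m diag_mx lam) :
  forall p : nat,
    (Fnum s p)%:R = \sum_(i < ntype1 s) (\sum_(j < ntype1 s) X j i) ^+ 2 * lam 0 i ^+ p.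
Proof.
move=> p; rewrite Fnum_Phi (expr_diagonalization p Horth Heig) mx_quad_form_diag.
apply: eq_bigr => i _; rewrite !mxE; congr (_ ^+ 2 * _).
by apply: eq_bigr => j _; rewrite mxE mul1r.
Qed.
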